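(* Let $n$ be a security parameter and $F\colon\{0,1\}^n\to\{0,1\}^m$ a function. If $F^{-1}$ has accessible Shannon entropy at most $k$, then for any $p=p(n)\in(0,1)$, $F^{-1}$ has $p$-accessible max-entropy at most $k/p+O(2^{-k/p})$.
   Context: An $F$-collision-finder is a randomized algorithm $A$ with $A(x;r)\in F^{-1}(F(x))$ for all $x$ and coins $r$. Let $X$ be uniform on $\{0,1\}^n$ and $R$ uniform coins of $A$. $F^{-1}$ has accessible Shannon entropy at most $k$ if for every probabilistic polynomial-time (PPT) $F$-collision-finder $A$, $H(A(X;R)\mid X)\le k$ for all sufficiently large $n$. $F^{-1}$ has $p$-accessible max-entropy at most $k'$ if for every PPT $F$-collision-finder $A$ there is a family of sets $\{\mathcal{L}(x)\}_x$, each of size at most $2^{k'}$, with $x\in\mathcal{L}(x)$, such that $\Pr[A(X;R)\in\mathcal{L}(X)]\ge1-p$ for all sufficiently large $n$. *)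

From HB Require Import structures.
From mathcomp Require Import all_boot all_order all_algebra.
From mathcomp Require Import reals exp.
Unset Printing Implicit Defensive.
Import Order.TTheory GRing.Theory Num.Theory.
Local Open Scope ring_scope.

Notation bits n := (n.-tuple bool).

(* A randomized algorithm (uniform over the security parameter n):
   on security parameter n it takes an input x in {0,1}^n and
   coins r in {0,1}^(coins n), and outputs an element of {0,1}^n. *)
Record alg := Alg {
  coins : nat -> nat ;
  run : forall n, bits n -> bits (coins n) -> bits n }.
Arguments run : clear implicits.

Definition collision_finder (m : nat -> nat) (F : forall n, bits n -> bits (m n))
  (A : alg) : Prop :=
  forall n (x : bits n) (r : bits (coins A n)), F n (run A n x r) = F n x.

Section Defs.
Variable R : realType.

Definition log2 (x : R) : R := ln x / ln 2.

Definition out_prob (A : alg) (n : nat) (x y : bits n) : R :=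
  #|[set r : bits (coins A n) | run A n x r == y]|%:R / (2 ^ coins A n)%:R.

(* H(A(X;R) | X) with X uniform on {0,1}^n (convention 0 log 0 = 0) *)
Definition cond_entropy (A : alg) (n : nat) : R :=
  ((2 ^ n)%:R)^-1 *
  \sum_(x : bits n) \sum_(y : bits n | 0 < out_prob A n x y)
     out_prob A n x y * log2 (out_prob A n x y)^-1.

Definition succ_prob (A : alg) (n : nat) (L : bits n -> {set bits n}) : R :=
  #|[set xr : bits n * bits (coins A n) | run A n xr.1 xr.2 \in L xr.1]|%:R
    / (2 ^ (n + coins A n))%:R.

(* F^{-1} has accessible Shannon entropy at most k, where Eff is the class of
   admissible (PPT) algorithms. *)
Definition acc_shannon_le (Eff : alg -> Prop) (m : nat -> nat)
  (F : forall n, bits n -> bits (m n)) (k : nat -> R) : Prop :=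
  forall A, Eff A -> collision_finder m F A ->
    exists N, forall n, (N <= n)%N -> cond_entropy A n <= k n.

Definition acc_maxent_le (Eff : alg -> Prop) (m : nat -> nat)
  (F : forall n, bits n -> bits (m n)) (p k' : nat -> R) : Prop :=
  forall A, Eff A -> collision_finder m F A ->
    exists L : forall n, bits n -> {set bits n},
      (forall n (x : bits n), x \in L n x /\ #|L n x|%:R <= 2 `^ (k' n)) /\
      exists N, forall n, (N <= n)%N -> 1 - p n <= succ_prob A n (L n).

End Defs.

From mathcomp Require Import all_boot all_order all_algebra.
From mathcomp Require Import reals exp sequences.
From mathcomp Require Import lra.
Import Order.TTheory GRing.Theory Num.Theory.
Local Open Scope ring_scope.

(* Let L(x) consist of x and of the outputs y that A(x; .) hits with probability
   at least 2^-T, where T = k/p (or T = 1 when k/p <= 0).  At most 2^T outputs are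
   that heavy.  The surprisal log(1/Pr[A(x) = y]) has mean H(A(X;R) | X) <= k <= p T,
   so by Markov's inequality A(X;R) falls outside L(X) with probability at most p.
   The slack 4 * 2^(-k/p) pays for the extra element x and for the case k/p <= 0. *)

Lemma card_preimset_fibers (aT rT : finType) (f : aT -> rT) (B : {set rT}) :
  #|[set a | f a \in B]| = (\sum_(y in B) #|[set a | f a == y]|)%N.
Proof.
rewrite -sum1_card (partition_big f (mem B)) => [|a]; last by rewrite inE.
apply: eq_bigr => y yB; rewrite -sum1_card; apply: eq_bigl => a.
by rewrite !inE; case: (f a =P y) => [->|]; rewrite ?andbT ?andbF.
Qed.

Lemma card_pair_dep {aT bT : finType} (P : aT -> bT -> bool) :
  #|[set ab : aT * bT | P ab.1 ab.2]| = (\sum_a #|[set b | P a b]|)%N.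
Proof.
rewrite -sum1_card (eq_bigl (fun ab => xpredT ab.1 && P ab.1 ab.2)) => [|ab].
  rewrite -(pair_big_dep xpredT P (fun _ _ => 1%N)).
  by apply: eq_bigr => a _; rewrite -sum1_card; apply: eq_bigl => b; rewrite inE.
by rewrite inE.
Qed.

Lemma ler_sum_subset (R : numDomainType) (I : finType) (P Q : pred I) (F : I -> R) :
  (forall i, P i -> Q i) -> (forall i, 0 <= F i) ->
  \sum_(i | P i) F i <= \sum_(i | Q i) F i.
Proof.
move=> PQ F_ge0; rewrite [X in _ <= X](bigID P) /=.
rewrite [X in _ <= X + _](eq_bigl P) => [|i]; last by rewrite andb_idl // => /PQ.
by rewrite lerDl sumr_ge0.
Qed.

Section Pow2.
Context {R : realType}.

Lemma pow2_ge1Dx (x : R) : 1 + x * ln 2 <= 2 `^ x.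
Proof. by rewrite /powR pnatr_eq0 expR_ge1Dx. Qed.

Lemma ln2_ge_half : 1 / 2 <= ln (2 : R).
Proof. by have := expR_ge1Dx (- ln (2 : R)); rewrite expRN lnK ?posrE //; lra. Qed.

Lemma ln2_gt0 : 0 < ln (2 : R).
Proof. by have := ln2_ge_half; lra. Qed.

Lemma ltr_pow2N_log2V (t x : R) : 0 < x -> (x < 2 `^ (- t)) = (t < log2 R x^-1).
Proof.
move=> x_gt0; rewrite -ltr_ln ?posrE ?powR_gt0 // ln_powR /log2 lnV ?posrE //.
by rewrite ltr_pdivlMr ?ln2_gt0 // mulNr ltrNr.
Qed.

Lemma one_plus_pow2_le (t : R) :
  1 + 2 `^ (if 0 < t then t else 1) <= 2 `^ (t + 4 * 2 `^ (- t)).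
Proof.
have ln2_half := ln2_ge_half.
case: ifPn => [t_gt0 | t_le0].
- rewrite powRD; last by rewrite pnatr_eq0 implybT.
  have pow2t_gt0 : 0 < 2 `^ t :> R by rewrite powR_gt0.
  have := pow2_ge1Dx (4 * 2 `^ (- t)); rewrite -(ler_pM2l pow2t_gt0) powRN.
  by rewrite mulrDr mulr1 !mulrA [2 `^ t * 4]mulrC mulfK ?lt0r_neq0 //; lra.
- rewrite powRr1 //; rewrite -leNgt in t_le0.
  have := pow2_ge1Dx (- t); have := pow2_ge1Dx (t + 4 * 2 `^ (- t)).
  move: (2 `^ (- t)) => w w_ge s_ge.
  have t_ln2 : - t * (1 / 2) <= - t * ln 2 by apply: ler_wpM2l; lra.
  have s_ge4 : t + 4 * w >= 4 by lra.
  have : (t + 4 * w - 4) * (ln 2 - 1 / 2) >= 0 by apply: mulr_ge0; lra.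
  lra.
Qed.

End Pow2.

Definition entropy {R : realType} {I : finType} (q : I -> R) : R :=
  \sum_(y | 0 < q y) q y * log2 R (q y)^-1.

Section FiniteDistribution.
Context {R : realType} {I : finType} {q : I -> R}.

Hypothesis q_ge0 : forall y, 0 <= q y.
Hypothesis q_sum1 : \sum_y q y = 1.

Lemma sum_sub_le1 (P : pred I) : \sum_(y | P y) q y <= 1.
Proof. by rewrite -q_sum1 ler_sum_subset. Qed.

Lemma card_heavy_le (c : R) : 0 < c -> #|[set y | c <= q y]|%:R <= c^-1.
Proof.
move=> c_gt0; rewrite -(ler_pM2l c_gt0) mulfV ?lt0r_neq0 //.
rewrite -sum1_card natr_sum mulr_sumr.
apply: le_trans (sum_sub_le1 (mem [set y | c <= q y])).
by apply: ler_sum => y; rewrite inE mulr1.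
Qed.

Lemma entropy_ge0_term y : 0 < q y -> 0 <= q y * log2 R (q y)^-1.
Proof.
move=> q_gt0; have q_le1 : q y <= 1.
  by have := sum_sub_le1 (pred1 y); rewrite big_pred1_eq.
by rewrite mulr_ge0 ?divr_ge0 ?ln_ge0 ?invf_ge1 ?(ltW q_gt0) ?(ltW ln2_gt0) ?ler1n.
Qed.

Lemma light_mass_le (t : R) : 0 < t ->
  \sum_(y | q y < 2 `^ (- t)) q y <= entropy q / t.
Proof.
move=> t_gt0; rewrite ler_pdivlMr // mulr_suml /entropy.
rewrite big_mkcond [X in _ <= X]big_mkcond /=.
apply: ler_sum => y _; case: ifPn => [q_light | _]; last first.
  by case: ifPn => // /entropy_ge0_term.
case: ifPn => [q_gt0 | ]; last first.
  rewrite -leNgt => q_le0.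
  have -> : q y = 0 by apply/eqP; rewrite eq_le q_le0 q_ge0.
  by rewrite mul0r.
move: q_light; rewrite ltr_pow2N_log2V // => /ltW t_le.
by rewrite ler_wpM2l // ltW.
Qed.

Lemma heavy_mass_ge (t : R) : 0 < t ->
  1 - entropy q / t <= \sum_(y | 2 `^ (- t) <= q y) q y.
Proof.
move=> t_gt0; have := light_mass_le _ t_gt0.
have := q_sum1; rewrite (bigID (fun y => 2 `^ (- t) <= q y)) /=.
under [X in _ + X = _]eq_bigl do rewrite -ltNge.
lra.
Qed.
End FiniteDistribution.

Section Algorithm.
Variables (R : realType) (A : alg) (n : nat).

Lemma out_prob_ge0 x y : 0 <= out_prob R A n x y.
Proof. by rewrite divr_ge0. Qed.

Lemma sum_out_probE x (B : {set bits n}) :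
  \sum_(y in B) out_prob R A n x y =
  #|[set r | run A n x r \in B]|%:R / (2 ^ coins A n)%:R.
Proof. by rewrite card_preimset_fibers natr_sum mulr_suml. Qed.

Lemma sum_out_prob x : \sum_y out_prob R A n x y = 1.
Proof.
rewrite (eq_bigl (fun y => y \in [set: bits n])) => [|y]; last by rewrite inE.
rewrite sum_out_probE (eq_card (B := setT)) => [|r]; last by rewrite !inE.
by rewrite cardsT card_tuple card_bool divff // pnatr_eq0 expn_eq0.
Qed.

Lemma card_heavy_outputs_le x (t : R) :
  #|[set y | 2 `^ (- t) <= out_prob R A n x y]|%:R <= 2 `^ t.
Proof.
have := card_heavy_le (out_prob_ge0 x) (sum_out_prob x) _ (powR_gt0 (- t) (ltr0n R 2)).
by rewrite powRN invrK.
Qed.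

Lemma succ_probE (L : bits n -> {set bits n}) :
  succ_prob R A n L = (2 ^ n)%:R^-1 * \sum_x \sum_(y in L x) out_prob R A n x y.
Proof.
rewrite /succ_prob (card_pair_dep (fun x r => run A n x r \in L x)).
rewrite natr_sum mulr_suml mulr_sumr; apply: eq_bigr => x _.
by rewrite sum_out_probE expnD natrM invfM mulrCA.
Qed.

Lemma succ_prob_ge (L : bits n -> {set bits n}) (t : R) : 0 < t ->
  (forall x, [set y | 2 `^ (- t) <= out_prob R A n x y] \subset L x) ->
  1 - cond_entropy R A n / t <= succ_prob R A n L.
Proof.
move=> t_gt0 heavy_sub; rewrite succ_probE.
have -> : cond_entropy R A n =
    (2 ^ n)%:R^-1 * \sum_x entropy (out_prob R A n x) by [].
have N_gt0 : 0 < (2 ^ n)%:R :> R by rewrite ltr0n expn_gt0.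
have : \sum_x (1 - entropy (out_prob R A n x) / t) <=
       \sum_x \sum_(y in L x) out_prob R A n x y.
  apply: ler_sum => x _.
  apply: le_trans (heavy_mass_ge (out_prob_ge0 x) (sum_out_prob x) _ t_gt0) _.
  apply: ler_sum_subset => [y heavy|]; last exact: out_prob_ge0.
  by apply: (subsetP (heavy_sub x)); rewrite inE.
rewrite sumrB sumr_const card_tuple card_bool -mulr_suml => sum_le.
apply: le_trans (ler_wpM2l _ sum_le); last by rewrite invr_ge0 ltW.
by rewrite mulrBr -mulr_natr mul1r mulVf ?lt0r_neq0 // mulrA.
Qed.
End Algorithm.

Theorem lemma3p8 (R : realType) :
  exists C : R,
  forall (Eff : alg -> Prop) (m : nat -> nat)
         (F : forall n, bits n -> bits (m n)) (k p : nat -> R),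
    (forall n, 0 < p n < 1) ->
    acc_shannon_le R Eff m F k ->
    acc_maxent_le R Eff m F p (fun n => k n / p n + C * 2 `^ (- (k n / p n))).
Proof.
exists 4 => Eff m F k p p_bounds shannon A A_eff A_finder.
have [N entropy_le_k] := shannon A A_eff A_finder.
pose T n := if 0 < k n / p n then k n / p n else 1.
have T_gt0 n : 0 < T n by rewrite /T; case: ifP.
pose L n x := x |: [set y | 2 `^ (- T n) <= out_prob R A n x y].
exists L; split => [n x | ].
  split; first exact: setU11.
  apply: le_trans (one_plus_pow2_le (k n / p n)).
  by rewrite cardsU1 natrD lerD ?lern1 ?leq_b1 ?card_heavy_outputs_le.
exists N => n n_ge; have /andP[p_gt0 _] := p_bounds n.
apply: le_trans (succ_prob_ge R A n (L n) (T n) (T_gt0 n) (fun x => subsetUr _ _)).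
rewrite lerD2l lerN2 ler_pdivrMr //; apply: le_trans (entropy_le_k n n_ge) _.
rewrite /T; case: ifPn => [_ | ]; first by rewrite mulrCA mulfV ?lt0r_neq0 ?mulr1.
by rewrite -leNgt ler_pdivrMr // mul0r => k_le0; rewrite mulr1; lra.
Qed.
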